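(* Consider an instance with $n$ agents, $m$ indivisible items and binary additive valuations, and fix a stable allocation $\chi$ with profile $(h_1,\dots,h_n)$ (notation as in the context). For integers $d\ge 0$ define $p_d=\{i: h_i=d \text{ and } \chi \text{ admits a transfer } i\to j \text{ for some } j \text{ with } h_j=d-1\}$, $q_d=\{i: h_i=d \text{ and } \chi \text{ admits a transfer } k\to i \text{ for some } k \text{ with } h_k=d+1\}$, $r_d=\{i: h_i=d,\ i\notin p_d,\ i\notin q_d\}$, $s_d=p_d\cup q_{d-1}$ (with $q_{-1}=\emptyset$), and let $R_d=\bigcup_{i\in r_d}\chi_i$ and $S_d=\bigcup_{i\in s_d}\chi_i$. Then for every stable allocation $\chi'$ and every $d$, every item of $R_d$ is allocated under $\chi'$ to an agent in $r_d$, and every item of $S_d$ is allocated under $\chi'$ to an agent in $s_d$.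
   Context: Agents $[n]$, items $[m]$. Each agent $i$ has a set $L_i\subseteq[m]$ of liked items and valuation $v_i(S)=|S\cap L_i|$. An allocation $\chi=(\chi_1,\dots,\chi_n)$ is a tuple of pairwise disjoint subsets of $[m]$; it is clean if $\chi_i\subseteq L_i$ for all $i$, and max-USW if it maximizes $\sum_i v_i(\chi_i)$. Throughout, ''allocation'' means a clean max-USW allocation. Profile: $(h_1,\dots,h_n)$, $h_i=|\chi_i|$. Given $\chi$, form a directed graph on $[n]$ with an arc $(i,i')$, $i\ne i'$, whenever some $o\in\chi_i$ has $o\in L_{i'}$; $\chi$ admits a transfer $u\to v$ if there is a simple directed path from $u$ to $v$ with at least one arc. A transfer $u\to v$ is narrowing if $h_u\ge h_v+2$; $\chi$ is stable if it admits no narrowing transfer. *)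

From mathcomp Require Import all_boot.
Set Implicit Arguments. Unset Strict Implicit. Unset Printing Implicit Defensive.

Section Fair.
Variables (n m : nat) (L : 'I_n -> {set 'I_m}).

Definition disjoint_alloc (chi : 'I_n -> {set 'I_m}) : Prop :=
  forall i j : 'I_n, i != j -> [disjoint chi i & chi j].

Definition val (i : 'I_n) (S : {set 'I_m}) : nat := #|S :&: L i|.

Definition usw (chi : 'I_n -> {set 'I_m}) : nat := \sum_(i < n) val i (chi i).

Definition clean (chi : 'I_n -> {set 'I_m}) : Prop := forall i, chi i \subset L i.

Definition max_usw (chi : 'I_n -> {set 'I_m}) : Prop :=
  forall chi', disjoint_alloc chi' -> usw chi' <= usw chi.

Definition is_alloc (chi : 'I_n -> {set 'I_m}) : Prop :=
  [/\ disjoint_alloc chi, clean chi & max_usw chi].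

Definition hh (chi : 'I_n -> {set 'I_m}) (i : 'I_n) : nat := #|chi i|.

Definition arc (chi : 'I_n -> {set 'I_m}) : rel 'I_n :=
  fun i i' => (i != i') && [exists o in chi i, o \in L i'].

Definition transfer (chi : 'I_n -> {set 'I_m}) (u v : 'I_n) : Prop :=
  exists p : seq 'I_n,
    [/\ p != [::], uniq (u :: p), path (arc chi) u p & last u p = v].

Definition narrowing (chi : 'I_n -> {set 'I_m}) (u v : 'I_n) : Prop :=
  transfer chi u v /\ hh chi v + 2 <= hh chi u.

Definition stable (chi : 'I_n -> {set 'I_m}) : Prop :=
  is_alloc chi /\ forall u v, ~ narrowing chi u v.

Definition pset (chi : 'I_n -> {set 'I_m}) (d : nat) (i : 'I_n) : Prop :=
  hh chi i = d /\ exists j, hh chi j + 1 = d /\ transfer chi i j.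

Definition qset (chi : 'I_n -> {set 'I_m}) (d : nat) (i : 'I_n) : Prop :=
  hh chi i = d /\ exists k, hh chi k = d + 1 /\ transfer chi k i.

Definition rset (chi : 'I_n -> {set 'I_m}) (d : nat) (i : 'I_n) : Prop :=
  hh chi i = d /\ ~ pset chi d i /\ ~ qset chi d i.

Definition sset (chi : 'I_n -> {set 'I_m}) (d : nat) (i : 'I_n) : Prop :=
  pset chi d i \/ (match d with 0 => False | d'.+1 => qset chi d' i end).

Definition RR (chi : 'I_n -> {set 'I_m}) (d : nat) (o : 'I_m) : Prop :=
  exists i, rset chi d i /\ o \in chi i.

Definition SS (chi : 'I_n -> {set 'I_m}) (d : nat) (o : 'I_m) : Prop :=
  exists i, sset chi d i /\ o \in chi i.

End Fair.

From Pilot Require Import Defs.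
From mathcomp Require Import all_boot zify.
Set Implicit Arguments. Unset Strict Implicit. Unset Printing Implicit Defensive.

(* In a stable allocation the height h drops by at most one along any path of
   the transfer graph, so s_d consists exactly of the agents lying on a path
   from an agent of height d to one of height d - 1, while r_d consists of the
   agents of height d lying on no such path.  Let an item o move from agent i
   under chi to agent j under chi', so that i -> j in the graph of chi, and
   consider the exchange graph (x -> y when an item of chi x lies in chi' y).
   If j does not reach i in it, then chi' (which, being max-USW, assigns every
   liked item) maps the items chi gives to the agents reachable from j into
   that set, plus o; counting gives a reachable v with h'_v > h_v (h' the
   profile of chi'), and symmetrically some u reaching i with h'_u < h_u.
   Stability of chi along u ->* i -> j ->* v and of chi' along the reversed
   path force h_u = h_v + 1, so i and j lie in the same s_d and in no r_d.
   Otherwise i and j are strongly connected, and membership in r_d and s_d is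
   constant on strongly connected components. *)

Lemma disjoint_setU1 (T : finType) (a : T) (A B : {set T}) :
  [disjoint a |: A & B] = (a \notin B) && [disjoint A & B].
Proof. by rewrite -disjoints1 -!setI_eq0 setIUl setU_eq0. Qed.

Lemma card_bigcup_disjoint (I T : finType) (F : I -> {set T}) :
  (forall i j, i != j -> [disjoint F i & F j]) ->
  #|\bigcup_i F i| = \sum_i #|F i|.
Proof.
move=> disjF; rewrite -sum1_card (partition_disjoint_bigcup addn) //.
by apply: eq_bigr => i _; rewrite sum1_card.
Qed.

Lemma card_bigcup_in_disjoint (I T : finType) (F : I -> {set T}) (X : {set I}) :
  (forall i j, i != j -> [disjoint F i & F j]) ->
  #|\bigcup_(i in X) F i| = \sum_(i in X) #|F i|.
Proof.
move=> disjF; rewrite big_mkcond [RHS]big_mkcond /= card_bigcup_disjoint.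
  by apply: eq_bigr => i _; case: (i \in X); rewrite ?cards0.
move=> i j ij; case: (i \in X); case: (j \in X);
  by rewrite ?disjF // -setI_eq0 ?setI0 ?set0I.
Qed.

Lemma card_lt_of_proper_bigcup (I T : finType) (A B : I -> {set T}) (X : {set I}) :
  (forall i j, i != j -> [disjoint A i & A j]) ->
  (forall i j, i != j -> [disjoint B i & B j]) ->
  \bigcup_(i in X) A i \proper \bigcup_(i in X) B i ->
  exists2 i, i \in X & #|A i| < #|B i|.
Proof.
move=> disjA disjB /proper_card; rewrite !card_bigcup_in_disjoint //.
case: (pickP [pred i in X | #|A i| < #|B i|]) => [i /andP[iX lt] _ | none].
  by exists i.
rewrite ltnNge leq_sum // => i iX; rewrite leqNgt; apply/negP => lt.
by move: (none i); rewrite /= iX lt.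
Qed.

(* [arc] alone would denote the sub-arc of a cycle from path.v. *)
Local Notation arc := Defs.arc.

Section StableAllocations.
Variables (n m : nat) (L : 'I_n -> {set 'I_m}).
Implicit Types (chi : 'I_n -> {set 'I_m}) (i j u v x y : 'I_n) (o : 'I_m).

Lemma disjoint_alloc_add chi x o :
  disjoint_alloc chi -> (forall y, o \notin chi y) ->
  disjoint_alloc (fun y => if y == x then o |: chi y else chi y).
Proof.
move=> dchi ofree y z yz.
have [yx|_] := eqVneq y x; have [zx|_] := eqVneq z x.
- by move: yz; rewrite yx zx eqxx.
- by rewrite disjoint_setU1 ofree dchi.
- by rewrite disjoint_sym disjoint_setU1 ofree disjoint_sym dchi.
- exact: dchi.
Qed.

Lemma max_usw_liked_allocated chi x o :
  disjoint_alloc chi -> max_usw L chi -> o \in L x -> exists y, o \in chi y.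
Proof.
move=> dchi maxchi oLx.
case: (pickP (fun y => o \in chi y)) => [y oy | none]; first by exists y.
have ofree y : o \notin chi y by rewrite none.
have usw_add : usw L (fun y => if y == x then o |: chi y else chi y) = (usw L chi).+1.
  rewrite /usw (bigD1 x) //= [in RHS](bigD1 x) //= eqxx -addSn; congr (_ + _).
    rewrite /Defs.val; have -> : (o |: chi x) :&: L x = o |: (chi x :&: L x).
      by apply/setP => w; rewrite !inE; case: eqP => // ->.
    by rewrite cardsU1 inE (negbTE (ofree x)).
  by apply: eq_bigr => y /negbTE ->.
by have := maxchi _ (disjoint_alloc_add x dchi ofree); rewrite usw_add ltnn.
Qed.

Lemma transferP chi u v :
  transfer L chi u v <-> u != v /\ connect (arc L chi) u v.
Proof.
split.
- case=> p [p0 up pp <-]; split; last by apply/connectP; exists p.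
  case: p p0 up {pp} => // a p _ /andP[ulast _].
  by apply: contraNneq ulast => ->; rewrite /= mem_last.
- case=> uv /connectP[p pp vlast]; move: uv; rewrite {}vlast.
  case/shortenP: pp => q qpath uq _ uq_last.
  by exists q; split => //; case: q qpath uq uq_last => //=; rewrite eqxx.
Qed.

Lemma stable_connect_hh chi u v :
  stable L chi -> connect (arc L chi) u v -> hh chi u <= (hh chi v).+1.
Proof.
case=> _ no_narrowing cuv; have [-> | uv] := eqVneq u v; first exact: leqW.
rewrite leqNgt; apply/negP => lt; apply: (no_narrowing u v).
by split; [exact/transferP | rewrite addn2].
Qed.

Lemma ssetP chi d x : stable L chi ->
  sset L chi d x <->
  exists u v, [/\ connect (arc L chi) u x, connect (arc L chi) x v,
                  hh chi u = d & (hh chi v).+1 = d].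
Proof.
move=> st; split.
- case=> [[hx [v [hv /transferP[_ cxv]]]] | ].
    by exists x, v; rewrite -addn1.
  case: d => // d [hx [u [hu /transferP[_ cux]]]].
  by exists u, x; rewrite hx hu addn1.
- case=> u [v [cux cxv hu hv]].
  have hux := stable_connect_hh st cux; have hxv := stable_connect_hh st cxv.
  have [hx | hx] : hh chi x = d \/ (hh chi x).+1 = d by lia.
  + left; split => //; exists v; split; first lia.
    by apply/transferP; split => //; apply: contra_eqN hv => /eqP <-; lia.
  + right; rewrite -hx; split => //; exists u; split; first lia.
    by apply/transferP; split => //; apply: contra_eqN hu => /eqP ->; lia.
Qed.

Lemma sset_segment chi u x v : stable L chi ->
  connect (arc L chi) u x -> connect (arc L chi) x v ->
  hh chi u = (hh chi v).+1 -> sset L chi (hh chi u) x.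
Proof. by move=> st cux cxv huv; apply/ssetP => //; exists u, v. Qed.

Lemma sset_uniq chi d e x :
  stable L chi -> sset L chi d x -> sset L chi e x -> d = e.
Proof.
move=> st /ssetP-/(_ st)[u [v [cux cxv <- hv]]].
move=> /ssetP-/(_ st)[u' [v' [cux' cxv' <- hv']]].
have := stable_connect_hh st (connect_trans cux cxv').
have := stable_connect_hh st (connect_trans cux' cxv); lia.
Qed.

Lemma sset_strong_connect chi d x y : stable L chi ->
  connect (arc L chi) x y -> connect (arc L chi) y x ->
  sset L chi d x -> sset L chi d y.
Proof.
move=> st cxy cyx /ssetP-/(_ st)[u [v [cux cxv hu hv]]].
apply/ssetP => //; exists u, v.
by split=> //; [exact: connect_trans cux cxy | exact: connect_trans cyx cxv].
Qed.

Lemma rsetE chi d x :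
  rset L chi d x <-> hh chi x = d /\ forall e, ~ sset L chi e x.
Proof.
split.
- case=> hx [np nq]; split=> // e [pe | ].
    by case: (pe) => he _; apply: np; rewrite -hx he.
  by case: e => // e qe; case: (qe) => he _; apply: nq; rewrite -hx he.
- case=> hx ns; split=> //; split=> [pd | qd].
  + by apply: (ns d); left.
  + by apply: (ns d.+1); right.
Qed.

Lemma rset_strong_connect chi d x y : stable L chi ->
  connect (arc L chi) x y -> connect (arc L chi) y x ->
  rset L chi d x -> rset L chi d y.
Proof.
move=> st cxy cyx /rsetE[hx x_off]; apply/rsetE; split; last first.
  by move=> e sy; apply: (x_off e); exact: sset_strong_connect st cyx cxy sy.
have hxy := stable_connect_hh st cxy; have hyx := stable_connect_hh st cyx.
case: (ltngtP (hh chi y) d) => [lt | gt | //]; exfalso.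
- by apply: (x_off (hh chi x)); apply: (sset_segment st (connect0 _ x) cxy); lia.
- by apply: (x_off (hh chi y)); apply: (sset_segment st cyx (connect0 _ x)); lia.
Qed.

Definition exchange chi chi' : rel 'I_n :=
  fun x y => (x != y) && [exists o, (o \in chi x) && (o \in chi' y)].

Lemma exchangeC chi chi' x y : exchange chi' chi x y = exchange chi chi' y x.
Proof.
by rewrite /exchange eq_sym; congr (_ && _); apply: eq_existsb => o; rewrite andbC.
Qed.

Lemma connect_exchangeC chi chi' x y :
  connect (exchange chi' chi) x y = connect (exchange chi chi') y x.
Proof.
rewrite -[RHS](connect_rev (exchange chi chi')); apply: eq_connect => a b.
exact: exchangeC.
Qed.

Lemma connect_exchange_arc chi chi' x y : clean L chi' ->
  connect (exchange chi chi') x y -> connect (arc L chi) x y.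
Proof.
move=> clean'; apply: connect_sub => a b /andP[ab /existsP[o /andP[oa ob]]].
by apply: connect1; rewrite /arc ab; apply/existsP; exists o; rewrite oa (subsetP (clean' b)).
Qed.

Lemma exchange_closure_gain chi chi' i j o :
  is_alloc L chi -> is_alloc L chi' -> o \in chi i -> o \in chi' j ->
  ~~ connect (exchange chi chi') j i ->
  exists2 v, connect (exchange chi chi') j v & hh chi v < hh chi' v.
Proof.
case=> dchi clean_chi _ [dchi' _ max'] oi oj not_ji.
pose X := [set v | connect (exchange chi chi') j v].
suff : exists2 v, v \in X & #|chi v| < #|chi' v| by case=> v; rewrite inE; exists v.
apply: (card_lt_of_proper_bigcup dchi dchi'); apply/properP; split.
- apply/subsetP => w /bigcupP[x]; rewrite inE => jx wx.
  have [y wy] := max_usw_liked_allocated dchi' max' (subsetP (clean_chi x) w wx).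
  apply/bigcupP; exists y; rewrite // inE.
  have [<- // | xy] := eqVneq x y; apply: connect_trans jx (connect1 _).
  by rewrite /exchange xy; apply/existsP; exists w; rewrite wx wy.
- exists o; first by apply/bigcupP; exists j; rewrite ?inE.
  apply/bigcupP => -[x]; rewrite inE => jx ox.
  have [xi | xi] := eqVneq x i; first by rewrite -xi jx in not_ji.
  by rewrite (disjointFr (dchi _ _ xi) ox) in oi.
Qed.

Lemma stable_exchange chi chi' i j o :
  stable L chi -> stable L chi' -> o \in chi i -> o \in chi' j ->
  connect (arc L chi) i j /\
  (connect (arc L chi) j i \/
   exists u v, [/\ connect (arc L chi) u i, connect (arc L chi) j v
                  & hh chi u = (hh chi v).+1]).
Proof.
move=> st st' oi oj.
have [[_ clean_chi _] _] := st; have [[_ clean_chi' _] _] := st'.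
have Eij : connect (exchange chi chi') i j.
  have [-> // | ij] := eqVneq i j; apply: connect1.
  by rewrite /exchange ij; apply/existsP; exists o; rewrite oi oj.
split; first exact: connect_exchange_arc clean_chi' Eij.
have [Eji | not_Eji] := boolP (connect (exchange chi chi') j i).
  by left; exact: connect_exchange_arc clean_chi' Eji.
right.
have [v Ejv gain_v] := exchange_closure_gain st.1 st'.1 oi oj not_Eji.
have not_Eij' : ~~ connect (exchange chi' chi) i j by rewrite connect_exchangeC.
have [u Eiu loss_u] := exchange_closure_gain st'.1 st.1 oj oi not_Eij'.
rewrite connect_exchangeC in Eiu.
have Euv := connect_trans Eiu (connect_trans Eij Ejv).
have Evu : connect (exchange chi' chi) v u by rewrite connect_exchangeC.
have huv := stable_connect_hh st (connect_exchange_arc clean_chi' Euv).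
have hvu := stable_connect_hh st' (connect_exchange_arc clean_chi Evu).
exists u, v; split; [exact: connect_exchange_arc clean_chi' Eiu
                   | exact: connect_exchange_arc clean_chi' Ejv | lia].
Qed.

Lemma rset_exchange chi chi' d i j o :
  stable L chi -> stable L chi' -> o \in chi i -> o \in chi' j ->
  rset L chi d i -> rset L chi d j.
Proof.
move=> st st' oi oj ri.
have [cij [cji | [u [v [cui cjv huv]]]]] := stable_exchange st st' oi oj.
  exact: rset_strong_connect st cij cji ri.
case/rsetE: ri => _ /(_ (hh chi u)); case.
exact: sset_segment st cui (connect_trans cij cjv) huv.
Qed.

Lemma sset_exchange chi chi' d i j o :
  stable L chi -> stable L chi' -> o \in chi i -> o \in chi' j ->
  sset L chi d i -> sset L chi d j.
Proof.
move=> st st' oi oj si.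
have [cij [cji | [u [v [cui cjv huv]]]]] := stable_exchange st st' oi oj.
  exact: sset_strong_connect st cij cji si.
rewrite (sset_uniq st si (sset_segment st cui (connect_trans cij cjv) huv)).
exact: sset_segment st (connect_trans cui cij) cjv huv.
Qed.

End StableAllocations.

Theorem lemma2 (n m : nat) (L : 'I_n -> {set 'I_m})
    (chi chi' : 'I_n -> {set 'I_m}) :
  stable L chi -> stable L chi' ->
  forall d : nat,
    (forall o : 'I_m, RR L chi d o -> exists i, rset L chi d i /\ o \in chi' i) /\
    (forall o : 'I_m, SS L chi d o -> exists i, sset L chi d i /\ o \in chi' i).
Proof.
move=> st st' d.
have [[_ clean_chi _] _] := st; have [[dchi' _ max'] _] := st'.
have reallocated o i : o \in chi i -> exists j, o \in chi' j.
  by move=> oi; apply: max_usw_liked_allocated dchi' max' (subsetP (clean_chi i) o oi).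
split=> o [i [Hi oi]]; have [j oj] := reallocated o i oi; exists j; split=> //.
- exact: rset_exchange st st' oi oj Hi.
- exact: sset_exchange st st' oi oj Hi.
Qed.
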